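(* Let $p$ be a prime, $n$ a non-negative integer and $A_*$ a graded commutative algebra over $\mathbb F_p$. Then $\Gamma_{n+1}(G_{p,n}(A_* ))=\{X\}$, i.e. the lower central series $G_{p,n}(A_* )\supset\Gamma_1(G_{p,n}(A_* ))\supset\cdots\supset\Gamma_{n+1}(G_{p,n}(A_* ))$ terminates in the trivial group. If $p$ is odd, then moreover $\Gamma_{n}(G_{p,n}^{ev}(A_* ))=\{X\}$.
   Context: Graded commutative means $ab=(-1)^{\deg a\deg b}ba$. If $p=2$, $G_2(A_* )$ is the set of power series $\alpha(X)=\sum_{i\ge0}\alpha_iX^{2^i}\in A_*[[X]]$ ($X$ of degree $-1$) with $\alpha_i\in A_{2^i-1}$ and $\alpha_0=1$. If $p$ is odd, let $\epsilon$ have degree $-1$ with $\epsilon^2=0$, $X$ degree $-2$, and $G_p(A_* )$ is the set of $\alpha(X)=\sum_{i\ge0}\alpha_iX^{p^i}\in (A_*\otimes_{\mathbb F_p}\mathbb F_p[\epsilon]/(\epsilon^2))[[X]]$ with $\alpha_i$ homogeneous of degree $2(p^i-1)$ and $\alpha_0-1\in(\epsilon)$; $G_p^{ev}(A_* )$ is the subgroup of those $\alpha$ with all $\alpha_i\in A_*$ and $\alpha_0=1$. The group law is $\alpha(X)\cdot\beta(X)=\beta(\alpha(X))$ (coefficient of $X^{p^i}$ equal to $\sum_{j=0}^i\alpha_{i-j}^{p^j}\beta_j$); the identity is $X$. $G_{p,n}(A_* )$ is the subgroup of $G_p(A_* )$ consisting of $\alpha(X)=\sum_i\alpha_iX^{p^i}$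 with $\alpha_i^{p^{n-i+1}}=0$ for $i=1,\dots,n$ and $\alpha_i=0$ for $i\ge n+1$, and for odd $p$, $G_{p,n}^{ev}(A_* )=G_{p,n}(A_* )\cap G_p^{ev}(A_* )$. For a group $G$, $\Gamma_0(G)=G$ and $\Gamma_{k+1}(G)=[\Gamma_k(G),G]$. *)

From mathcomp Require Import all_boot all_algebra.

Set Implicit Arguments.
Unset Strict Implicit.
Unset Printing Implicit Defensive.

Import GRing.Theory.
Local Open Scope ring_scope.

(* An F_p-algebra is a ring R with p \in [pchar R] (its F_p-vector space     *)
(* structure is then forced).  The grading A_* = (+)_{d >= 0} A_d is given   *)
(* by predicates Ad d (the homogeneous elements of degree d).                *)
Record graded_comm_alg (p : nat) (R : pzRingType) (Ad : nat -> R -> Prop) :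
    Prop := GradedCommAlg {
  gca_char : (p%:R : R) = 0;
  gca_zero : forall d, Ad d 0;
  gca_sub : forall d x y, Ad d x -> Ad d y -> Ad d (x - y);
  gca_one : Ad 0%N 1;
  gca_mul : forall d e x y, Ad d x -> Ad e y -> Ad (d + e)%N (x * y);
  gca_span : forall x, exists (m : nat) (f : nat -> R),
      (forall d, Ad d (f d)) /\ x = \sum_(d < m) f d;
  gca_direct : forall (m : nat) (f : nat -> R),
      (forall d, Ad d (f d)) -> \sum_(d < m) f d = 0 ->
      forall d, (d < m)%N -> f d = 0;
  gca_comm : forall d e x y, Ad d x -> Ad e y ->
      x * y = (-1) ^+ (d * e) * (y * x)
}.

Section LowerCentral.
Variables (T : Type) (mul : T -> T -> T) (e : T) (G : T -> Prop).

Inductive gen_subgroup (P : T -> Prop) : T -> Prop :=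
  | gen_base x : P x -> gen_subgroup P x
  | gen_one : gen_subgroup P e
  | gen_mul x y : gen_subgroup P x -> gen_subgroup P y ->
      gen_subgroup P (mul x y)
  | gen_inv x y : gen_subgroup P x -> G y -> mul x y = e ->
      gen_subgroup P y.

Definition commutator_set (H K : T -> Prop) (c : T) : Prop :=
  exists x y, [/\ H x, K y, G c & mul x y = mul (mul y x) c].

Fixpoint lcs (k : nat) : T -> Prop :=
  match k with
  | 0 => G
  | k'.+1 => gen_subgroup (commutator_set (lcs k') G)
  end.

End LowerCentral.

(* p = 2 : G_2(A_* ) as sequences (alpha_i)_i, alpha(X) = sum alpha_i X^(2^i) *)
Section PowerSeries.
Variable R : pzRingType.

(* coefficient of X^(p^i) of alpha . beta = beta(alpha(X)) *)
Definition ps_mul (p : nat) (a b : nat -> R) : nat -> R :=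
  fun i => \sum_(j < i.+1) (a (i - j)%N) ^+ (p ^ j) * b j.

Definition ps_X : nat -> R := fun i => if i == 0%N then 1 else 0.

Definition in_G2 (Ad : nat -> R -> Prop) (a : nat -> R) : Prop :=
  a 0%N = 1 /\ forall i, Ad (2 ^ i - 1)%N (a i).

Definition in_G2n (Ad : nat -> R -> Prop) (n : nat) (a : nat -> R) : Prop :=
  [/\ in_G2 Ad a,
      forall i, (1 <= i <= n)%N -> (a i) ^+ (2 ^ (n - i + 1)) = 0
    & forall i, (n + 1 <= i)%N -> a i = 0].

(* p odd : coefficients in A_* (x) F_p[eps]/(eps^2); the pair (a, b) stands  *)
(* for a + eps b.  All coefficients occurring are homogeneous of even total  *)
(* degree, so a is of even degree and the (graded) product is                *)
(*   (a + eps b)(c + eps d) = ac + eps (bc + ad).                            *)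
Definition eps_mul (x y : R * R) : R * R :=
  (x.1 * y.1, x.2 * y.1 + x.1 * y.2).

Definition eps_one : R * R := (1, 0).

Definition eps_exp (x : R * R) (k : nat) : R * R := iter k (eps_mul x) eps_one.

Definition eps_zero : R * R := (0, 0).

Definition pse_mul (p : nat) (a b : nat -> R * R) : nat -> R * R :=
  fun i =>
    (\sum_(j < i.+1) (eps_mul (eps_exp (a (i - j)%N) (p ^ j)) (b j)).1,
     \sum_(j < i.+1) (eps_mul (eps_exp (a (i - j)%N) (p ^ j)) (b j)).2).

Definition pse_X : nat -> R * R := fun i => if i == 0%N then eps_one else eps_zero.

(* alpha_i = a_i + eps b_i homogeneous of degree 2(p^i - 1), with eps of     *)
(* degree -1 : a_i in A_{2(p^i-1)}, b_i in A_{2(p^i-1)+1};                   *)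
(* alpha_0 - 1 in (eps) : a_0 = 1.                                          *)
Definition in_Gp (p : nat) (Ad : nat -> R -> Prop) (a : nat -> R * R) : Prop :=
  [/\ (a 0%N).1 = 1,
      forall i, Ad (2 * (p ^ i - 1))%N (a i).1
    & forall i, Ad (2 * (p ^ i - 1) + 1)%N (a i).2].

Definition in_Gpn (p : nat) (Ad : nat -> R -> Prop) (n : nat) (a : nat -> R * R)
    : Prop :=
  [/\ in_Gp p Ad a,
      forall i, (1 <= i <= n)%N -> eps_exp (a i) (p ^ (n - i + 1)) = eps_zero
    & forall i, (n + 1 <= i)%N -> a i = eps_zero].

Definition in_Gpn_ev (p : nat) (Ad : nat -> R -> Prop) (n : nat)
    (a : nat -> R * R) : Prop :=
  [/\ in_Gpn p Ad n a, a 0%N = eps_one & forall i, (a i).2 = 0].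

End PowerSeries.

From HB Require Import structures.
From mathcomp Require Import all_boot all_algebra.
From Stdlib Require Import FunctionalExtensionality.

(* Let W_k be the set of series agreeing with X below X^(p^k).  If x lies in
   W_k and y_0 = 1, then for 0 < i <= k the i-th coefficient of both x.y and
   y.x is x_i + y_i, so every commutator of x with y lies in W_(k+1).  Hence
   Gamma_k lies in W_(k+1), and W_(n+1) meets G_(p,n) only in X.
   For odd p the constant term y_0 = 1 + eps b spoils this at index k, where
   the commutator picks up x_k eps b.  One uses instead the filtration
   F_k = {a in W_k | a mod eps lies in W_(k+1)}: on F_k the coefficient x_k
   is a multiple of eps, so x_k eps b = 0.  Both arguments run over an
   arbitrary ring, applied to R and to the dual numbers R[eps]/(eps^2), over
   which pse_mul is the plain composition law and reduction mod eps is a ring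
   morphism. *)

Set Implicit Arguments.
Unset Strict Implicit.
Unset Printing Implicit Defensive.

Import GRing.Theory.
Local Open Scope ring_scope.

Section CentralFiltration.
Variables (T : Type) (mul : T -> T -> T) (e : T) (G : T -> Prop).

Lemma gen_subgroup_sub (P Q : T -> Prop) :
  (forall x, P x -> Q x) -> Q e ->
  (forall x y, Q x -> Q y -> Q (mul x y)) ->
  (forall x y, Q x -> G y -> mul x y = e -> Q y) ->
  forall x, gen_subgroup mul e G P x -> Q x.
Proof. by move=> PQ Qe Qmul Qinv x; elim=> *; eauto. Qed.

Record central_filtration (F : nat -> T -> Prop) : Prop := CentralFiltration {
  filtration0 : forall x, G x -> F 0%N x;
  filtration_id : forall k, F k.+1 e;
  filtration_mul : forall k x y, F k.+1 x -> F k.+1 y -> F k.+1 (mul x y);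
  filtration_inv : forall k x y, F k.+1 x -> G y -> mul x y = e -> F k.+1 y;
  filtration_comm : forall k x y c, F k x -> G y -> G c ->
    mul x y = mul (mul y x) c -> F k.+1 c
}.

Variable F : nat -> T -> Prop.
Hypothesis filtF : central_filtration F.

Lemma lcs_sub_filtration k x : lcs mul e G k x -> F k x.
Proof.
elim: k x => [|k IH] x /=; first exact: filtration0.
apply: gen_subgroup_sub;
  [|exact: filtration_id | exact: filtration_mul | exact: filtration_inv].
by move=> c [a [y [/IH Fa Gy Gc E]]]; apply: filtration_comm Fa Gy Gc E.
Qed.

Lemma lcs_trivial_of_filtration k :
  (forall y, mul e y = y) -> G e -> (forall c, G c -> F k c -> c = e) ->
  forall x, lcs mul e G k x <-> x = e.
Proof.
move=> mul1g Ge FG1 x; split; last first.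
  by case: k {FG1} => [|k] ->; [|exact: gen_one].
case: k FG1 x => [|k] FG1 x.
  by move=> Gx; apply: FG1 (filtration0 filtF Gx).
apply: (gen_subgroup_sub (Q := eq^~ e)) => //
  [c [a [y [/lcs_sub_filtration Fa Gy Gc E]]] | _ _ -> -> | _ y -> _].
- exact: FG1 Gc (filtration_comm filtF Fa Gy Gc E).
- exact: mul1g.
- by rewrite mul1g.
Qed.

End CentralFiltration.

Section PowerSeriesGroupLaw.
Variables (S : pzRingType) (q : nat).
Hypothesis q_gt0 : (0 < q)%N.
Implicit Types (a b c u x y : nat -> S) (m k : nat).

Local Notation X := (ps_X S).

Definition eq_upto m a b := forall i, (i < m)%N -> a i = b i.

Lemma eq_upto_le m k a b : (m <= k)%N -> eq_upto k a b -> eq_upto m a b.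
Proof. by move=> mk ab i im; apply: ab (leq_trans im mk). Qed.

Lemma eq_uptoX_trunc n a :
  (forall i, (n < i)%N -> a i = 0) -> eq_upto n.+1 a X -> a = X.
Proof.
move=> a_trunc aX; apply: functional_extensionality => i.
case: (ltnP n i) => [ni | /aX //].
by rewrite a_trunc // /ps_X; case: i ni.
Qed.

Lemma ps_mul0 a b : ps_mul q a b 0 = a 0%N * b 0%N.
Proof. by rewrite /ps_mul big_ord1 subn0 expn0 expr1. Qed.

Lemma ps_mul_ends a b i :
  (forall j, (0 < j <= i)%N -> a (i.+1 - j)%N ^+ (q ^ j) * b j = 0) ->
  ps_mul q a b i.+1 = a i.+1 * b 0%N + a 0%N ^+ (q ^ i.+1) * b i.+1.
Proof.
move=> mid0; rewrite /ps_mul big_ord_recl big_ord_recr /= big1 ?addr0.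
  by rewrite subn0 expn0 expr1 subnn add0r.
by move=> j _; apply: mid0; rewrite /bump /= ltn_ord.
Qed.

Lemma ps_mulXl b : ps_mul q X b = b.
Proof.
apply: functional_extensionality => -[|i]; first by rewrite ps_mul0 mul1r.
rewrite ps_mul_ends /ps_X /= ?mul0r ?expr1n ?mul1r ?add0r // => j /andP [j0 ji].
by rewrite subn_eq0 leqNgt ltnS ji expr0n expn_eq0 eqn0Ngt q_gt0 mul0r.
Qed.

Lemma eq_uptoX_coef m x i : eq_upto m x X -> (0 < i < m)%N -> x i = 0.
Proof. by move=> xX /andP [i0 im]; rewrite xX // /ps_X; case: i i0 {im}. Qed.

Lemma ps_mul_eqX_l x y i :
  (0 < i)%N -> eq_upto i x X -> ps_mul q x y i = x i * y 0%N + y i.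
Proof.
case: i => // i _ xX; have x0 : x 0%N = 1 by rewrite xX.
rewrite ps_mul_ends ?x0 ?expr1n ?mul1r // => j /andP [j0 ji].
rewrite (eq_uptoX_coef (i := (i.+1 - j)%N) xX) ?expr0n ?expn_eq0 ?eqn0Ngt
  ?q_gt0 ?mul0r //.
by rewrite subn_gt0 ltnS ji ltn_subrL j0.
Qed.

Lemma ps_mul_eqX_r x y i :
  (0 < i)%N -> eq_upto i x X -> ps_mul q y x i = y i + y 0%N ^+ (q ^ i) * x i.
Proof.
case: i => // i _ xX; have x0 : x 0%N = 1 by rewrite xX.
rewrite ps_mul_ends ?x0 ?mulr1 // => j /andP [j0 ji].
by rewrite (eq_uptoX_coef (i := j) xX) ?mulr0 // j0 ltnS.
Qed.

Lemma expr_expn_eq1 (u : S) i : u ^+ q = 1 -> (0 < i)%N -> u ^+ (q ^ i) = 1.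
Proof. by move=> uq; case: i => // i _; rewrite expnS exprM uq expr1n. Qed.

Lemma ps_mul_cancel m u c :
  u 0%N ^+ q = 1 -> eq_upto m (ps_mul q u c) u -> eq_upto m c X.
Proof.
move=> uq ucu; elim/ltn_ind=> i IH im; have := ucu i im.
case: i IH im => [|i] IH im.
  have u0V : u 0%N ^+ q.-1 * u 0%N = 1 by rewrite -exprSr prednK.
  by rewrite ps_mul0 => u0c0; rewrite -[c 0%N]mul1r -u0V -mulrA u0c0.
have cX : eq_upto i.+1 c X by move=> j ji; apply: IH (ltn_trans ji im).
rewrite ps_mul_eqX_r // expr_expn_eq1 // mul1r -[RHS]addr0.
by move/addrI ->.
Qed.

Lemma eq_uptoX_mul m x y :
  eq_upto m x X -> eq_upto m y X -> eq_upto m (ps_mul q x y) X.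
Proof.
move=> xX yX [|i] im; first by rewrite ps_mul0 xX ?yX // mulr1.
rewrite ps_mul_eqX_l //; last exact: eq_upto_le (ltnW im) xX.
by rewrite (eq_uptoX_coef (i := i.+1) xX) ?(eq_uptoX_coef (i := i.+1) yX)
  ?mul0r ?addr0.
Qed.

Lemma eq_uptoX_inv m x y :
  eq_upto m x X -> ps_mul q x y = X -> eq_upto m y X.
Proof.
case: m => [|m] xX xy; first by [].
by apply: (ps_mul_cancel (u := x)); rewrite ?xX ?expr1n // xy => i /xX.
Qed.

Lemma ps_mul_comm_upto k x y :
  eq_upto k x X -> x 0%N * y 0%N = y 0%N * x 0%N -> y 0%N ^+ q = 1 ->
  ((0 < k)%N -> x k * y 0%N = x k) ->
  eq_upto k.+1 (ps_mul q x y) (ps_mul q y x).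
Proof.
move=> xX xy0 yq xky [|i] ik; first by rewrite !ps_mul0.
have xiX : eq_upto i.+1 x X by apply: eq_upto_le xX.
rewrite ps_mul_eqX_l // ps_mul_eqX_r // expr_expn_eq1 // mul1r addrC.
case: (ltnP i.+1 k) => [ik' | ki].
  by rewrite (eq_uptoX_coef (i := i.+1) xX) ?mul0r.
have ki1 : k = i.+1 by apply/eqP; rewrite eqn_leq ki -ltnS ik.
by rewrite -ki1 xky // ki1.
Qed.

Lemma ps_commutator_eqX k x y c :
  eq_upto k x X -> x 0%N ^+ q = 1 -> y 0%N ^+ q = 1 ->
  x 0%N * y 0%N = y 0%N * x 0%N -> ((0 < k)%N -> x k * y 0%N = x k) ->
  ps_mul q x y = ps_mul q (ps_mul q y x) c -> eq_upto k.+1 c X.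
Proof.
move=> xX xq yq xy0 xky xyc; apply: (ps_mul_cancel (u := ps_mul q y x)).
  by rewrite ps_mul0 exprMn_comm // xq yq mulr1.
by rewrite -xyc; apply: ps_mul_comm_upto.
Qed.

Lemma unipotent_central_filtration (G : (nat -> S) -> Prop) :
  (forall a, G a -> a 0%N = 1) ->
  central_filtration (ps_mul q) X G (fun k a => eq_upto k.+1 a X).
Proof.
move=> G1; split=> [x Gx [|//] _ | // | k | k | k x y c xX Gy _].
- exact: G1.
- exact: eq_uptoX_mul.
- by move=> x y xX _; apply: eq_uptoX_inv.
have [x0 y0] : x 0%N = 1 /\ y 0%N = 1 by split; [exact: xX | exact: G1].
by apply: ps_commutator_eqX; rewrite ?x0 ?y0 ?expr1n ?mulr1.
Qed.

Lemma lcs_unipotent_eqX (G : (nat -> S) -> Prop) n k :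
  (n <= k)%N -> G X -> (forall a, G a -> a 0%N = 1) ->
  (forall a, G a -> forall i, (n < i)%N -> a i = 0) ->
  forall a, lcs (ps_mul q) X G k a <-> a = X.
Proof.
move=> nk GX G1 Gtrunc.
apply: (lcs_trivial_of_filtration (unipotent_central_filtration G1)) => //.
  exact: ps_mulXl.
by move=> c Gc cX; apply: eq_uptoX_trunc (Gtrunc c Gc) (eq_upto_le _ cX).
Qed.

End PowerSeriesGroupLaw.

Lemma ps_mul_rmorph (S S' : pzRingType) (f : {rmorphism S -> S'}) q a b :
  f \o ps_mul q a b = ps_mul q (f \o a) (f \o b).
Proof.
apply: functional_extensionality => i /=; rewrite rmorph_sum.
by apply: eq_bigr => j _; rewrite rmorphM rmorphXn.
Qed.

Lemma ps_X_rmorph (S S' : pzRingType) (f : {rmorphism S -> S'}) :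
  f \o ps_X S = ps_X S'.
Proof.
by apply: functional_extensionality => i /=; rewrite /ps_X; case: (i == 0%N);
  rewrite ?rmorph1 ?rmorph0.
Qed.

Section DualNumbers.
Variable R : pzRingType.

(* An alias of R * R, whose own ring structure is the componentwise one;
   (a, b) stands for a + eps b with eps central. *)
Definition dual_number : Type := (R * R)%type.
HB.instance Definition _ := GRing.Zmodule.on dual_number.

Fact dual_mulA : associative (@eps_mul R).
Proof.
by move=> x y z; rewrite /eps_mul /= !mulrA mulrDl mulrDr !mulrA addrA.
Qed.
Fact dual_mul1l : left_id (eps_one R) (@eps_mul R).
Proof. by case=> a b; rewrite /eps_mul /= !mul1r mul0r add0r. Qed.
Fact dual_mul1r : right_id (eps_one R) (@eps_mul R).
Proof. by case=> a b; rewrite /eps_mul /= !mulr1 mulr0 addr0. Qed.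
Fact dual_mulDl : left_distributive (@eps_mul R) +%R.
Proof. by move=> x y z; rewrite /eps_mul /= !mulrDl addrACA. Qed.
Fact dual_mulDr : right_distributive (@eps_mul R) +%R.
Proof. by move=> x y z; rewrite /eps_mul /= !mulrDr addrACA. Qed.

HB.instance Definition _ := GRing.Zmodule_isPzRing.Build dual_number
  dual_mulA dual_mul1l dual_mul1r dual_mulDl dual_mulDr.

Definition dual_re (x : dual_number) : R := x.1.

Fact dual_re_is_nmod_morphism : nmod_morphism dual_re. Proof. by []. Qed.
HB.instance Definition _ := GRing.isNmodMorphism.Build dual_number R dual_re
  dual_re_is_nmod_morphism.
Fact dual_re_is_monoid_morphism : monoid_morphism dual_re. Proof. by []. Qed.
HB.instance Definition _ := GRing.isMonoidMorphism.Build dual_number R dual_re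
  dual_re_is_monoid_morphism.

Lemma eps_expE (x : dual_number) k : eps_exp x k = x ^+ k.
Proof. by elim: k => // k IH; rewrite exprS -IH. Qed.

Lemma pse_mul_dual p : pse_mul p = @ps_mul dual_number p.
Proof.
apply: functional_extensionality => a; apply: functional_extensionality => b.
apply: functional_extensionality => i; rewrite /pse_mul /ps_mul.
rewrite -(raddf_sum (@fst R R)) -(raddf_sum (@snd R R)) -surjective_pairing.
by apply: eq_bigr => j _; rewrite eps_expE.
Qed.

Lemma pse_X_dual : pse_X R = ps_X dual_number.
Proof. by []. Qed.

Lemma dual_expr_re1 p (x : dual_number) :
  p%:R = 0 :> R -> x.1 = 1 -> x ^+ p = 1.
Proof.
case: x => a b charRp /= a1; rewrite a1.
suff -> : ((1, b) : dual_number) ^+ p = (1, b *+ p).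
  by rewrite -mulr_natr charRp mulr0.
elim: p {charRp} => // m IH.
by rewrite exprS IH /GRing.mul /= /eps_mul /= !mul1r mulr1 mulrS.
Qed.

Lemma dual_mul_re1C (x y : dual_number) : x.1 = 1 -> y.1 = 1 -> x * y = y * x.
Proof.
case: x => a b; case: y => c d /= -> ->.
by rewrite /GRing.mul /= /eps_mul /= !mulr1 !mul1r addrC.
Qed.

Lemma dual_mul_re0 (x y : dual_number) : x.1 = 0 -> y.1 = 1 -> x * y = x.
Proof.
case: x => a b; case: y => c d /= -> ->.
by rewrite /GRing.mul /= /eps_mul /= !mul0r mulr1 addr0.
Qed.

End DualNumbers.

Arguments dual_re {R}.

Section DualFiltration.
Variables (R : pzRingType) (p : nat).
Hypotheses (p_gt0 : (0 < p)%N) (charRp : p%:R = 0 :> R).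
Variable G : (nat -> dual_number R) -> Prop.
Hypothesis G_re1 : forall a, G a -> (a 0%N).1 = 1.

Definition dual_filtration k (a : nat -> dual_number R) :=
  eq_upto k.+1 (dual_re \o a) (ps_X R) /\ eq_upto k a (ps_X (dual_number R)).

Lemma dual_central_filtration :
  central_filtration (ps_mul p) (ps_X (dual_number R)) G dual_filtration.
Proof.
have re_mul := ps_mul_rmorph (@dual_re R) p.
split=> [x Gx | k | k x y [xre xX] [yre yX] | k x y [xre xX] _ xy
          | k x y c [xre xX] Gy _ xyc].
- by split=> // -[|//] _; apply: G_re1.
- by split=> //; rewrite ps_X_rmorph.
- by split; [rewrite re_mul|]; apply: (eq_uptoX_mul p_gt0).
- split; last by apply: (eq_uptoX_inv p_gt0 xX).
  by apply: (eq_uptoX_inv p_gt0 xre); rewrite -re_mul xy ps_X_rmorph.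
have [x0 y0] : (x 0%N).1 = 1 /\ (y 0%N).1 = 1.
  by split; [exact: xre | exact: G_re1].
split.
  have re_xyc : ps_mul p (dual_re \o x) (dual_re \o y) =
      ps_mul p (ps_mul p (dual_re \o y) (dual_re \o x)) (dual_re \o c).
    by rewrite -!re_mul xyc.
  apply: (ps_commutator_eqX p_gt0) xre _ _ _ _ re_xyc;
    by rewrite /dual_re /= ?x0 ?y0 ?expr1n ?mulr1.
apply: (ps_commutator_eqX p_gt0) xX _ _ _ _ xyc; rewrite ?dual_expr_re1 //.
- exact: dual_mul_re1C.
- move=> k_gt0; apply: dual_mul_re0 y0.
  by have := xre k (ltnSn k); rewrite /= /ps_X (gtn_eqF k_gt0).
Qed.

Lemma lcs_dual_eqX n : G (ps_X (dual_number R)) ->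
  (forall a, G a -> forall i, (n < i)%N -> a i = 0) ->
  forall a,
    lcs (ps_mul p) (ps_X (dual_number R)) G n.+1 a <-> a = ps_X (dual_number R).
Proof.
move=> GX Gtrunc.
apply: (lcs_trivial_of_filtration dual_central_filtration) => //.
  exact: ps_mulXl.
by move=> c Gc [_ cX]; apply: eq_uptoX_trunc (Gtrunc c Gc) cX.
Qed.

End DualFiltration.

Lemma ps_X_in_G2n (R : pzRingType) (Ad : nat -> R -> Prop) p n :
  graded_comm_alg p Ad -> in_G2n Ad n (ps_X R).
Proof.
move=> gca; split=> [|[|i] // _|[|i] //]; rewrite ?addn1 //.
  split=> // -[|i]; last exact: (gca_zero gca).
  by rewrite expn0 subnn; exact: gca_one gca.
by rewrite /ps_X /= expr0n expn_eq0.
Qed.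

Lemma pse_X_in_Gpn_ev (R : pzRingType) (Ad : nat -> R -> Prop) p n :
  (0 < p)%N -> graded_comm_alg p Ad -> in_Gpn_ev p Ad n (pse_X R).
Proof.
move=> p_gt0 gca; split=> //; last first.
  by move=> i; rewrite /pse_X; case: (i == 0%N).
split=> [|[|i] // _|[|i] //]; rewrite ?addn1 //.
  split=> // -[|i] /=; rewrite ?expn0 ?subnn ?muln0;
    [exact: (gca_one gca) | exact: (gca_zero gca)..].
by rewrite /pse_X /= eps_expE expr0n expn_eq0 eqn0Ngt p_gt0.
Qed.

Theorem theorem3p6 (p : nat) (n : nat) (R : pzRingType)
    (Ad : nat -> R -> Prop) :
  prime p -> graded_comm_alg p Ad ->
  (p = 2%N ->
     forall a, lcs (ps_mul 2) (ps_X R) (in_G2n Ad n) n.+1 a <-> a = ps_X R) /\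
  (odd p ->
     (forall a, lcs (pse_mul p) (pse_X R) (in_Gpn p Ad n) n.+1 a <-> a = pse_X R)
     /\
     (forall a, lcs (pse_mul p) (pse_X R) (in_Gpn_ev p Ad n) n a <-> a = pse_X R)).
Proof.
move=> p_prime gca; have p_gt0 := prime_gt0 p_prime.
have GevX := pse_X_in_Gpn_ev n p_gt0 gca.
have trunc_n i : (n < i)%N -> (n + 1 <= i)%N by rewrite addn1.
split=> [_ | _].
  apply: (lcs_unipotent_eqX (isT : (0 < 2)%N) (leqnSn n)).
  - exact: ps_X_in_G2n gca.
  - by move=> b [[]].
  - by move=> b [_ _ bn] i /trunc_n /bn.
rewrite pse_mul_dual pse_X_dual; split.
  apply: (lcs_dual_eqX p_gt0 (gca_char gca)).
  - by move=> b [[]].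
  - by case: GevX.
  - by move=> b [_ _ bn] i /trunc_n /bn.
apply: (@lcs_unipotent_eqX (dual_number R) p p_gt0 _ n n (leqnn n)) => //.
- by move=> b [].
- by move=> b [[_ _ bn] _ _] i /trunc_n /bn.
Qed.
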